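(* Let $H$ be a finite-dimensional Hopf algebra over a field $\Bbbk$ and $B$ a right $H$-comodule algebra. A $B$-module $M$ is isomorphic to the zero object in $\mathcal{C}(B,H)$ if and only if $M$ is a direct summand (as a $B$-module) of $M\otimes H$.
   Context: $H$ has comultiplication $\Delta(h)=\sum h_1\otimes h_2$, counit $\epsilon$, antipode $S$. A right $H$-comodule algebra is a unital $\Bbbk$-algebra $B$ with an algebra map $\Delta_B:B\to B\otimes H$, $\Delta_B(b)=\sum b_1\otimes b_2$, which is coassociative and counital ($(\mathrm{Id}_B\otimes\epsilon)\Delta_B=\mathrm{Id}_B$, $(\mathrm{Id}_B\otimes\Delta)\Delta_B=(\Delta_B\otimes\mathrm{Id}_H)\Delta_B$) and unital. For a $B$-module $M$ and an $H$-module $U$, $M\otimes U$ is a $B$-module via $b\cdot(x\otimes u)=\sum b_1x\otimes b_2u$; in particular $M\otimes H$ (with $H$ the left regular module). A morphism of $B$-modules is called null-homotopic if it factors through a $B$-module of the form $N\otimes H$ for some $B$-module $N$. The category $\mathcal{C}(B,H)$ is the quotient of the category of $B$-modules by the ideal of null-homotopic morphisms (same objects; morphisms are $B$-module maps modulo null-homotopic ones). *)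

From HB Require Import structures.
From mathcomp Require Import all_boot all_order all_algebra all_field.
Set Implicit Arguments. Unset Strict Implicit. Unset Printing Implicit Defensive.
Import GRing.Theory.
Local Open Scope ring_scope.

(* We fix the basis  e := vbasis {:H}  of H (of size n := \dim {:H}).  For any
   space V, an element of V (x) H is written uniquely as  sum_i v_i (x) e_i,
   so V (x) H is encoded as  {ffun 'I_n -> V}  (t encodes sum_i t i (x) e_i).
   Iterating, V (x) H (x) H = (V (x) H) (x) H is {ffun 'I_n -> {ffun 'I_n -> V}},
   s encoding  sum_{m,j} s m j (x) e_j (x) e_m. *)

Section HopfTensor.
Variables (K : fieldType) (H : falgType K).

Definition hdim : nat := \dim (fullv : {vspace H}).
Definition hb : hdim.-tuple H := vbasis fullv.
Definition hcoord (j : 'I_hdim) (h : H) : K := coord hb j h.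

Definition tens (V : Type) := {ffun 'I_hdim -> V}.

(* product in A (x) H, for a K-algebra A:
   (sum_i a_i (x) e_i)(sum_j b_j (x) e_j) = sum_{i,j} a_i b_j (x) e_i e_j *)
Definition tmul (A : lalgType K) (a b : tens A) : tens A :=
  [ffun k => \sum_i \sum_j hcoord k (tnth hb i * tnth hb j) *: (a i * b j)].

Definition tone (A : lalgType K) : tens A := [ffun k => hcoord k 1 *: 1].

Definition id_tens_comul (V : lmodType K) (Delta : H -> tens H) (t : tens V)
  : tens (tens V) :=
  [ffun m => [ffun j => \sum_k hcoord j (Delta (tnth hb k) m) *: t k]].

Definition map_tens (V W : Type) (f : V -> W) (t : tens V) : tens W :=
  [ffun k => f (t k)].

Definition id_tens_counit (V : lmodType K) (eps : H -> K) (t : tens V) : V :=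
  \sum_k eps (tnth hb k) *: t k.

Record hopf_algebra (Delta : H -> tens H) (eps : H -> K) (S : H -> H) : Prop := {
  comul_linear : forall (a : K) (x y : H) k,
      Delta (a *: x + y) k = a *: Delta x k + Delta y k;
  counit_linear : forall (a : K) (x y : H), eps (a *: x + y) = a * eps x + eps y;
  antipode_linear : forall (a : K) (x y : H), S (a *: x + y) = a *: S x + S y;
  coassoc : forall h,
      map_tens Delta (Delta h) = id_tens_comul Delta (Delta h);
  counit_r : forall h, id_tens_counit eps (Delta h) = h;
  counit_l : forall h, \sum_k eps (Delta h k) *: tnth hb k = h;
  comul_mul : forall x y, Delta (x * y) = tmul (Delta x) (Delta y);
  comul_one : Delta 1 = tone H;
  counit_mul : forall x y, eps (x * y) = eps x * eps y;
  counit_one : eps 1 = 1;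
  antipode_l : forall h, \sum_k S (Delta h k) * tnth hb k = eps h *: 1;
  antipode_r : forall h, \sum_k Delta h k * S (tnth hb k) = eps h *: 1
}.

Record comodule_algebra (Delta : H -> tens H) (eps : H -> K)
  (B : algType K) (DeltaB : B -> tens B) : Prop := {
  coact_linear : forall (a : K) (x y : B) k,
      DeltaB (a *: x + y) k = a *: DeltaB x k + DeltaB y k;
  coact_mul : forall x y, DeltaB (x * y) = tmul (DeltaB x) (DeltaB y);
  coact_one : DeltaB 1 = tone B;
  coact_counit : forall b, id_tens_counit eps (DeltaB b) = b;
  coact_coassoc : forall b,
      map_tens DeltaB (DeltaB b) = id_tens_comul Delta (DeltaB b)
}.

Section Modules.
Variables (B : algType K) (DeltaB : B -> tens B).

(* B-action on N (x) H :  b.(x (x) h) = sum b_1 x (x) b_2 h *)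
Definition tact (N : lmodType B) (b : B) (x : tens N) : tens N :=
  [ffun k => \sum_i \sum_j
     ((hcoord k (tnth hb i * tnth hb j))%:A : B) *: (DeltaB b i *: x j)].

Definition bmod_hom (M M' : lmodType B) (f : M -> M') : Prop :=
  (forall x y, f (x + y) = f x + f y) /\ (forall b x, f (b *: x) = b *: f x).
Definition bmod_hom_to_tens (M N : lmodType B) (f : M -> tens N) : Prop :=
  (forall x y, f (x + y) = f x + f y) /\ (forall b x, f (b *: x) = tact b (f x)).
Definition bmod_hom_from_tens (N M : lmodType B) (f : tens N -> M) : Prop :=
  (forall x y, f (x + y) = f x + f y) /\ (forall b x, f (tact b x) = b *: f x).

Definition null_homotopic (M M' : lmodType B) (f : M -> M') : Prop :=
  exists (N : lmodType B) (u : M -> tens N) (v : tens N -> M'),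
    bmod_hom_to_tens u /\ bmod_hom_from_tens v /\ forall x, f x = v (u x).

(* M and M' are isomorphic in the quotient category C(B,H): there are
   B-module maps f, g whose composites agree with the identities modulo
   null-homotopic morphisms. *)
Definition iso_CBH (M M' : lmodType B) : Prop :=
  exists (f : M -> M') (g : M' -> M),
    bmod_hom f /\ bmod_hom g /\
    null_homotopic (fun x => g (f x) - x) /\
    null_homotopic (fun y => f (g y) - y).

Definition summand_of_tens (M : lmodType B) : Prop :=
  exists (i : M -> tens M) (p : tens M -> M),
    bmod_hom_to_tens i /\ bmod_hom_from_tens p /\ forall x, p (i x) = x.

End Modules.
End HopfTensor.

Definition zero_bmod (B : nzRingType) : lmodType B := 'rV[B]_0.

From HB Require Import structures.
From mathcomp Require Import all_boot all_order all_algebra all_field.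
From mathcomp Require Import ring.
Set Implicit Arguments. Unset Strict Implicit. Unset Printing Implicit Defensive.
Import GRing.Theory.
Local Open Scope ring_scope.

(* If f : M -> 0 and g : 0 -> M are inverse in C(B,H), then g o f = 0, so
   id_M = -(g o f - id_M) factors as M --u--> N (x) H --v--> M.  The maps
     i := (v (x) Id_H) o (Id_N (x) Delta) o u : M -> M (x) H,
     p := Id_M (x) eps : M (x) H -> M
   are B-linear (i by coassociativity of the coaction and multiplicativity of
   Delta, p by counitality of the coaction and multiplicativity of eps), and
   p o i = v o (Id_N (x) (Id_H (x) eps) Delta) o u = v o u = id_M.
   Conversely, a splitting M -> M (x) H -> M makes id_M null-homotopic. *)

Section LinearFor.
Variables (R : pzRingType) (U : lmodType R) (V : zmodType) (s : GRing.Scale.law R V).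
Variables (f : U -> V) (f_lin : linear_for s f).

Lemma linear_for_sum I r (P : pred I) (F : I -> U) :
  f (\sum_(i <- r | P i) F i) = \sum_(i <- r | P i) f (F i).
Proof. exact: (raddf_sum (HB.pack f (GRing.isLinear.Build R U V s f f_lin))). Qed.

Lemma linear_forZ a x : f (a *: x) = s a (f x).
Proof. exact: scalable_linear. Qed.

End LinearFor.

Lemma additive_sum (U V : zmodType) (f : U -> V) :
  {morph f : x y / x + y} ->
  forall I r (P : pred I) (F : I -> U),
  f (\sum_(i <- r | P i) F i) = \sum_(i <- r | P i) f (F i).
Proof.
move=> fD I r P F; have f0 : f 0 = 0 by apply: (addrI (f 0)); rewrite -fD !addr0.
exact: (big_morph f fD f0).
Qed.

Section ScalarsInModule.
Variables (K : fieldType) (B : algType K) (N : lmodType B).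

Lemma scale_algA (c d : K) (x : N) : c%:A *: (d%:A *: x) = (c * d)%:A *: x.
Proof. by rewrite scalerA mulr_algl scalerA. Qed.

Lemma scale_algC (c : K) (b : B) (x : N) : c%:A *: (b *: x) = b *: (c%:A *: x).
Proof. by rewrite !scalerA mulr_algl mulr_algr. Qed.

Lemma scale_algZ (c : K) (b : B) (x : N) : (c *: b) *: x = c%:A *: (b *: x).
Proof. by rewrite scalerA mulr_algl. Qed.

Lemma scale_alg_suml (I : finType) (F : I -> K) (x : N) :
  (\sum_i F i)%:A *: x = \sum_i (F i)%:A *: x.
Proof. by rewrite !scaler_suml. Qed.

Lemma scale_alg_delta (I : finType) (l : I) (F : I -> N) :
  \sum_k ((k == l)%:R)%:A *: F k = F l.
Proof.
rewrite (bigD1 l) //= eqxx !scale1r big1 ?addr0 // => k /negbTE ->.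
by rewrite !scale0r.
Qed.

Lemma scale_alg_pull (I J L : finType) (c : I -> J -> L -> K) (X : J -> L -> N) :
  \sum_i \sum_j \sum_l (c i j l)%:A *: X j l =
  \sum_j \sum_l (\sum_i c i j l)%:A *: X j l.
Proof.
rewrite exchange_big; apply: eq_bigr => j _.
by rewrite exchange_big; apply: eq_bigr => l _; rewrite scale_alg_suml.
Qed.

Lemma scale_alg_expand (I J : finType) (x : K) (f : I -> K) (g : J -> K)
    (b : I -> B) (t : J -> N) :
  x%:A *: ((\sum_i f i *: b i) *: \sum_j (g j)%:A *: t j) =
  \sum_i \sum_j (x * f i * g j)%:A *: (b i *: t j).
Proof.
(* [rewrite scaler_suml] fails: the sum is formed in B as a K-module. *)
have scale_suml (v : N) : (\sum_i f i *: b i) *: v = \sum_i (f i *: b i) *: v.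
  exact: scaler_suml.
rewrite scale_suml scaler_sumr; apply: eq_bigr => i _.
rewrite scale_algZ scale_algA !scaler_sumr; apply: eq_bigr => j _.
by rewrite -scale_algC scale_algA.
Qed.

End ScalarsInModule.

Lemma zero_bmod_eq0 (B : nzRingType) (y : zero_bmod B) : y = 0.
Proof. exact: thinmx0. Qed.

Section ComoduleTensor.
Variables (K : fieldType) (H : falgType K).

Local Notation e i := (tnth (hb H) i).

Lemma hcoord_expansion (h : H) : h = \sum_i hcoord i h *: e i.
Proof.
rewrite {1}(@coord_vbasis _ _ h fullv) ?memvf //.
by apply: eq_bigr => i _; rewrite /hcoord (tnth_nth 0).
Qed.

Lemma hcoord_sum l I r (P : pred I) (F : I -> H) :
  hcoord l (\sum_(i <- r | P i) F i) = \sum_(i <- r | P i) hcoord l (F i).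
Proof. exact: linear_sum. Qed.

Lemma hcoordZ l (a : K) (x : H) : hcoord l (a *: x) = a * hcoord l x.
Proof. exact: linearZ. Qed.

Lemma hcoord_basis l k : hcoord l (e k) = (k == l)%:R.
Proof. by rewrite /hcoord (tnth_nth 0) coord_free //; exact: basis_free (vbasisP _). Qed.

(* Structure constants: e_i e_j = \sum_l mul_coef l i j e_l and
   Delta e_k = \sum_(j, m) comul_coef k j m e_j (x) e_m. *)
Definition mul_coef l i j := hcoord l (e i * e j).

Lemma mul_coef_unit k j : \sum_i hcoord i 1 * mul_coef k i j = (j == k)%:R.
Proof.
rewrite -hcoord_basis.
have -> : e j = (\sum_i hcoord i 1 *: e i) * e j by rewrite -hcoord_expansion mul1r.
by rewrite mulr_suml hcoord_sum; apply: eq_bigr => i _; rewrite -scalerAl hcoordZ.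
Qed.

Variables (Delta : H -> tens H H) (eps : H -> K).
Hypothesis Delta_lin : forall m, linear (fun x => Delta x m).
Hypothesis eps_lin : scalar eps.
Hypothesis DeltaM : forall x y, Delta (x * y) = tmul (Delta x) (Delta y).
Hypothesis epsM : forall x y, eps (x * y) = eps x * eps y.
Hypothesis Delta_counit : forall h, id_tens_counit eps (Delta h) = h.

Definition comul_coef k j m := hcoord j (Delta (e k) m).

Lemma Delta_sum m I r (P : pred I) (F : I -> H) :
  Delta (\sum_(i <- r | P i) F i) m = \sum_(i <- r | P i) Delta (F i) m.
Proof. exact: (linear_for_sum (Delta_lin m)). Qed.

Lemma DeltaZ m a x : Delta (a *: x) m = a *: Delta x m.
Proof. exact: (linear_forZ (Delta_lin m)). Qed.

Lemma eps_sum I r (P : pred I) (F : I -> H) :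
  eps (\sum_(i <- r | P i) F i) = \sum_(i <- r | P i) eps (F i).
Proof. exact: (@linear_for_sum _ _ _ _ eps eps_lin). Qed.

Lemma epsZ a x : eps (a *: x) = a * eps x.
Proof. exact: (@linear_forZ _ _ _ _ eps eps_lin). Qed.

Lemma comul_coef_mul l m a b :
  \sum_k mul_coef k a b * comul_coef k l m =
  \sum_i \sum_j \sum_a' \sum_b'
    mul_coef l a' b' * mul_coef m i j * comul_coef a a' i * comul_coef b b' j.
Proof.
have -> : \sum_k mul_coef k a b * comul_coef k l m = hcoord l (Delta (e a * e b) m).
  rewrite [e a * e b]hcoord_expansion Delta_sum hcoord_sum.
  by apply: eq_bigr => k _; rewrite DeltaZ hcoordZ.
rewrite DeltaM ffunE hcoord_sum; apply: eq_bigr => i _.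
rewrite hcoord_sum; apply: eq_bigr => j _.
rewrite hcoordZ [Delta (e a) i]hcoord_expansion [Delta (e b) j]hcoord_expansion.
rewrite mulr_suml hcoord_sum mulr_sumr; apply: eq_bigr => a' _.
rewrite mulr_sumr hcoord_sum mulr_sumr; apply: eq_bigr => b' _.
rewrite -scalerAl -scalerAr !hcoordZ /mul_coef /comul_coef; ring.
Qed.

Lemma comul_coef_counit k l : \sum_m eps (e m) * comul_coef k l m = (k == l)%:R.
Proof.
rewrite -hcoord_basis -{1}(Delta_counit (e k)) /id_tens_counit hcoord_sum.
by apply: eq_bigr => m _; rewrite hcoordZ.
Qed.

Lemma mul_coef_counit i j : \sum_k eps (e k) * mul_coef k i j = eps (e i) * eps (e j).
Proof.
rewrite -epsM [e i * e j]hcoord_expansion eps_sum.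
by apply: eq_bigr => k _; rewrite epsZ mulrC.
Qed.

Variables (B : algType K) (DeltaB : B -> tens H B).
Hypothesis DeltaB_lin : forall m, linear (fun b => DeltaB b m).
Hypothesis DeltaB1 : DeltaB 1 = tone H B.
Hypothesis DeltaB_counit : forall b, id_tens_counit eps (DeltaB b) = b.
Hypothesis DeltaB_coassoc :
  forall b, map_tens DeltaB (DeltaB b) = id_tens_comul Delta (DeltaB b).

Lemma DeltaBZ m a b : DeltaB (a *: b) m = a *: DeltaB b m.
Proof. exact: (linear_forZ (DeltaB_lin m)). Qed.

Lemma DeltaB_coassocE b i a :
  DeltaB (DeltaB b i) a = \sum_k comul_coef k a i *: DeltaB b k.
Proof.
have := congr1 (fun s : tens H (tens H B) => s i a) (DeltaB_coassoc b).
by rewrite !ffunE.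
Qed.

Section TensorModule.
Variable N : lmodType B.

Lemma tactE b (s : tens H N) l :
  tact DeltaB b s l = \sum_i \sum_j (mul_coef l i j)%:A *: (DeltaB b i *: s j).
Proof. by rewrite ffunE. Qed.

Lemma tact0 b : tact DeltaB b (0 : tens H N) = 0.
Proof.
apply/ffunP => k; rewrite tactE ffunE big1 // => i _.
by rewrite big1 // => j _; rewrite ffunE !scaler0.
Qed.

Lemma tact_scalar (c : K) (s : tens H N) :
  tact DeltaB c%:A s = [ffun k => c%:A *: s k].
Proof.
apply/ffunP => k; rewrite tactE ffunE.
have DeltaB_scalar i : DeltaB c%:A i = (c * hcoord i 1)%:A.
  by rewrite DeltaBZ DeltaB1 ffunE scalerA.
under eq_bigr => i _ do under eq_bigr => j _ do rewrite DeltaB_scalar scale_algA.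
rewrite exchange_big /= -(scale_alg_delta k (fun j => c%:A *: s j)).
apply: eq_bigr => j _; rewrite scale_algA -scale_alg_suml; congr (_%:A *: _).
rewrite -mul_coef_unit mulr_suml; apply: eq_bigr => i _; ring.
Qed.

(* Id_N (x) Delta, as [id_tens_comul], with K acting on N through B. *)
Definition comul_tens (t : tens H N) : tens H (tens H N) :=
  [ffun m => [ffun j => \sum_k (comul_coef k j m)%:A *: t k]].

Lemma comul_tensE t m j : comul_tens t m j = \sum_k (comul_coef k j m)%:A *: t k.
Proof. by rewrite !ffunE. Qed.

Lemma comul_tensD s t m : comul_tens (s + t) m = comul_tens s m + comul_tens t m.
Proof.
apply/ffunP => j; rewrite [RHS]ffunE !comul_tensE -big_split.
by apply: eq_bigr => k _; rewrite ffunE scalerDr.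
Qed.

Lemma comul_tens_tact b (t : tens H N) m :
  comul_tens (tact DeltaB b t) m =
  \sum_i \sum_j tact DeltaB ((mul_coef m i j)%:A * DeltaB b i) (comul_tens t j).
Proof.
apply/ffunP => l; rewrite sum_ffunE; under eq_bigr => i _ do rewrite sum_ffunE.
(* Expand both sides along the DeltaB b a *: t b'; after coassociativity of the
   coaction on the right, the coefficients agree by multiplicativity of Delta. *)
transitivity (\sum_a \sum_b' (\sum_k mul_coef k a b' * comul_coef k l m)%:A
                               *: (DeltaB b a *: t b')).
  rewrite comul_tensE -scale_alg_pull; apply: eq_bigr => k _.
  rewrite tactE scaler_sumr; apply: eq_bigr => a _.
  by rewrite scaler_sumr; apply: eq_bigr => b' _; rewrite scale_algA mulrC.
under eq_bigr => i _ do under eq_bigr => j _ do rewrite tactE.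
under eq_bigr => i _ do under eq_bigr => j _ do under eq_bigr => a' _ do
  under eq_bigr => b' _ do
    rewrite mulr_algl DeltaBZ [(_ *: DeltaB _ _) *: _]scale_algZ scale_algA
            DeltaB_coassocE comul_tensE scale_alg_expand.
under eq_bigr => i _ do under eq_bigr => j _ do under eq_bigr => a' _ do
  rewrite scale_alg_pull.
under eq_bigr => i _ do under eq_bigr => j _ do rewrite scale_alg_pull.
under eq_bigr => i _ do rewrite scale_alg_pull.
rewrite scale_alg_pull; apply: eq_bigr => a _; apply: eq_bigr => b' _.
congr (_%:A *: _); rewrite comul_coef_mul.
do 4!(apply: eq_bigr => ? _); ring.
Qed.

Lemma comul_tens_counit (t : tens H N) :
  \sum_m tact DeltaB (eps (e m))%:A (comul_tens t m) = t.
Proof.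
apply/ffunP => l; rewrite sum_ffunE.
under eq_bigr => m _ do rewrite tact_scalar ffunE comul_tensE scaler_sumr.
under eq_bigr => m _ do under eq_bigr => k _ do rewrite scale_algA.
rewrite exchange_big /=.
under eq_bigr => k _ do rewrite -scale_alg_suml comul_coef_counit.
exact: scale_alg_delta.
Qed.

Definition counit_tens (t : tens H N) : N := \sum_k (eps (e k))%:A *: t k.

Lemma counit_tens_hom : bmod_hom_from_tens DeltaB counit_tens.
Proof.
split=> [s t|b s]; rewrite /counit_tens.
  by rewrite -big_split; apply: eq_bigr => k _; rewrite ffunE scalerDr.
under eq_bigr => k _ do rewrite tactE scaler_sumr.
under eq_bigr => k _ do under eq_bigr => i _ do rewrite scaler_sumr.
under eq_bigr => k _ do under eq_bigr => i _ do under eq_bigr => j _ do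
  rewrite scale_algA.
rewrite scale_alg_pull.
under eq_bigr => i _ do under eq_bigr => j _ do rewrite mul_coef_counit.
rewrite -[in RHS](DeltaB_counit b) /id_tens_counit scaler_suml.
apply: eq_bigr => i _; rewrite scale_algZ !scaler_sumr; apply: eq_bigr => j _.
by rewrite -scale_algC !scale_algA mulrC.
Qed.

End TensorModule.

Section Lift.
Variables (M N M' : lmodType B) (u : M -> tens H N) (v : tens H N -> M').

Definition comul_lift (x : M) : tens H M' := [ffun m => v (comul_tens (u x) m)].

Lemma comul_liftE x m : comul_lift x m = v (comul_tens (u x) m).
Proof. by rewrite ffunE. Qed.

Lemma comul_lift_hom :
  bmod_hom_to_tens DeltaB u -> bmod_hom_from_tens DeltaB v ->
  bmod_hom_to_tens DeltaB comul_lift.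
Proof.
move=> [uD uZ] [vD vZ]; split=> [x y|b x]; apply/ffunP => m.
  by rewrite [RHS]ffunE !comul_liftE uD comul_tensD vD.
rewrite comul_liftE uZ comul_tens_tact (additive_sum vD) tactE.
apply: eq_bigr => i _; rewrite (additive_sum vD); apply: eq_bigr => j _.
by rewrite vZ comul_liftE scalerA.
Qed.

End Lift.

Lemma summand_of_tens_factor (M N : lmodType B) (u : M -> tens H N) (v : tens H N -> M) :
  bmod_hom_to_tens DeltaB u -> bmod_hom_from_tens DeltaB v ->
  (forall x, v (u x) = x) -> summand_of_tens DeltaB M.
Proof.
move=> hu hv vuK; exists (comul_lift u v), (@counit_tens M).
split; first exact: comul_lift_hom.
split=> [|x]; first exact: counit_tens_hom.
rewrite /counit_tens; under eq_bigr => m _ do rewrite comul_liftE -hv.2.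
by rewrite -(additive_sum hv.1) comul_tens_counit.
Qed.

Lemma iso_CBH_zero_summand (M : lmodType B) :
  iso_CBH DeltaB M (zero_bmod B) -> summand_of_tens DeltaB M.
Proof.
case=> f [g [_ [[gD _] [[N [u [v [hu [[vD vZ] gf_id]]]]] _]]]].
have g0 : g 0 = 0 by apply: (addrI (g 0)); rewrite -gD !addr0.
apply: (summand_of_tens_factor (v := fun t => - v t) hu).
- by split=> [s t|b s]; rewrite ?vD ?opprD // vZ scalerN.
- by move=> x; rewrite -gf_id (zero_bmod_eq0 (f x)) g0 sub0r opprK.
Qed.

End ComoduleTensor.

Lemma summand_iso_CBH_zero (K : fieldType) (H : falgType K) (B : algType K)
    (DeltaB : B -> tens H B) (M : lmodType B) :
  summand_of_tens DeltaB M -> iso_CBH DeltaB M (zero_bmod B).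
Proof.
case=> i [p [[iD iZ] [hp pi_id]]].
have zero_hom (M1 M2 : lmodType B) : bmod_hom (fun _ : M1 => 0 : M2).
  by split=> *; rewrite ?addr0 ?scaler0.
exists (fun _ => 0), (fun _ => 0).
split; first exact: zero_hom; split; first exact: zero_hom; split.
- exists M, (fun x => i (- x)), p; split; last split => //.
  + by split=> [x y|b x]; rewrite ?opprD ?iD // -iZ scalerN.
  + by move=> x; rewrite pi_id sub0r.
- exists M, (fun _ => 0), (fun _ => 0); split; last split.
  + by split=> *; rewrite ?addr0 ?tact0.
  + by split=> *; rewrite ?addr0 ?scaler0.
  + by move=> y; rewrite (zero_bmod_eq0 y) subr0.
Qed.

Theorem lemma2p7 (K : fieldType) (H : falgType K)
  (Delta : H -> tens H H) (eps : H -> K) (S : H -> H)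
  (hH : hopf_algebra Delta eps S)
  (B : algType K) (DeltaB : B -> tens H B)
  (hB : comodule_algebra Delta eps DeltaB)
  (M : lmodType B) :
  iso_CBH DeltaB M (zero_bmod B) <-> summand_of_tens DeltaB M.
Proof.
split; last exact: summand_iso_CBH_zero.
have Delta_lin m : linear (fun x => Delta x m).
  by move=> a x y; exact: (comul_linear hH).
have DeltaB_lin m : linear (fun b => DeltaB b m).
  by move=> a x y; exact: (coact_linear hB).
exact: (iso_CBH_zero_summand Delta_lin (counit_linear hH) (comul_mul hH)
          (counit_mul hH) (counit_r hH) DeltaB_lin (coact_one hB)
          (coact_counit hB) (coact_coassoc hB)).
Qed.
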